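(* Let $H$ be a Hilbert space of finite dimension $m$ and $n\ge 1$ an integer. Call a POVM $\{\Pi_p,\Pi_m,\Pi_?\}$ on $H^{\otimes n}$ (positive operators with $\Pi_p+\Pi_m+\Pi_?=I$) an unambiguous discrimination between pure and mixed states if (i) $\mathrm{Tr}(\Pi_p\rho^{\otimes n})=0$ for every mixed state $\rho$ on $H$ (density operator that is not a rank-one projector), and (ii) $\langle\psi|^{\otimes n}\Pi_m|\psi\rangle^{\otimes n}=0$ for every unit vector $|\psi\rangle\in H$. Define its efficiency $$p=\int_{\rho\ \text{mixed}}\mathrm{Tr}(\rho^{\otimes n}\Pi_m)\,\eta(\rho)\,d\rho+\int_{\rho\ \text{pure}}\mathrm{Tr}(\rho^{\otimes n}\Pi_p)\,\eta(\rho)\,d\rho .$$ Then the POVM $$\Pi_p=0,\qquad \Pi_m=\Phi(H^{\otimes n}_{asym}),\qquad \Pi_?=\Phi(H^{\otimes n}_{sym})$$ is an unambiguous discrimination between pure and mixed states, and it has the maximum efficiency among all unambiguous discriminations between pure and mixed states (i.e., it is the optimal unambiguous discrimination).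
   Context: $H^{\otimes n}_{sym}$ denotes the symmetric subspace of $H^{\otimes n}$ (the vectors invariant under all permutations of the $n$ tensor factors, equivalently the span of all $|\psi\rangle^{\otimes n}$, $|\psi\rangle\in H$), and $H^{\otimes n}_{asym}$ denotes its orthogonal complement in $H^{\otimes n}$. $\Phi(K)$ denotes the orthogonal projector onto a subspace $K$. A purity function $\mu$ on density operators satisfies $\mu(U\rho U^\dagger)=\mu(\rho)$ for all unitaries $U$, $\mu(\rho)=1$ iff $\rho$ is pure, and $0\le\mu(\rho)<1$ otherwise; ''pure'' thus means $\mu(\rho)=1$ and ''mixed'' means $\mu(\rho)<1$. The prior is given by a nonnegative density $\eta$ with respect to a measure $d\rho$ on the set of density operators on $H$, with $\eta(U\rho U^\dagger)=\eta(\rho)$ for all unitaries $U$. *)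

From HB Require Import structures.
From mathcomp Require Import all_boot all_order all_algebra all_fingroup.
From mathcomp Require Import complex.
From mathcomp Require Import all_classical all_reals all_analysis.
From mathcomp Require Export spectral.
Import Order.TTheory GRing.Theory Num.Theory.
Local Open Scope ring_scope.
Local Open Scope classical_set_scope.

Section QDefs.
Context {R : realType}.
Local Notation C := (R[i]).

Definition adj {p q} (A : 'M[C]_(p, q)) : 'M[C]_(q, p) := (map_mx Num.conj A)^T.

Definition psd {k} (A : 'M[C]_k) : Prop :=
  forall v : 'cV[C]_k, 0 <= (adj v *m A *m v) 0 0.

Definition unitvec {k} (v : 'cV[C]_k) : Prop := (adj v *m v) 0 0 = 1.

Definition density {m} (rho : 'M[C]_m) : Prop := psd rho /\ \tr rho = 1.

Definition pure {m} (rho : 'M[C]_m) : Prop :=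
  exists psi : 'cV[C]_m, unitvec psi /\ rho = psi *m adj psi.

Definition mixed {m} (rho : 'M[C]_m) : Prop := density rho /\ ~ pure rho.

(* H^{(x) n} = C^{#|tidx m n|}, with product basis indexed by the
   functions 'I_n -> 'I_m (one index per tensor factor). *)
Definition tidx (m n : nat) := {ffun 'I_n -> 'I_m}.
Definition tdim (m n : nat) := #|{: tidx m n}|.

Definition tpow {m} n (rho : 'M[C]_m) : 'M[C]_(tdim m n) :=
  \matrix_(a, b) \prod_(k < n)
     rho ((enum_val a : tidx m n) k) ((enum_val b : tidx m n) k).

Definition tpowv {m} n (psi : 'cV[C]_m) : 'cV[C]_(tdim m n) :=
  \col_a \prod_(k < n) psi ((enum_val a : tidx m n) k) 0.

Definition permv {m n} (s : 'S_n) (v : 'cV[C]_(tdim m n)) : 'cV[C]_(tdim m n) :=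
  \col_a v (enum_rank [ffun k => (enum_val a : tidx m n) (s k)]) 0.

Definition sym_space m n : set 'cV[C]_(tdim m n) :=
  [set v | forall s : 'S_n, permv s v = v].

Definition asym_space m n : set 'cV[C]_(tdim m n) :=
  [set v | forall w, sym_space m n w -> (adj w *m v) 0 0 = 0].

Definition orth_proj {k} (P : 'M[C]_k) (K : set 'cV[C]_k) : Prop :=
  [/\ P *m P = P, adj P = P & forall v, K v <-> P *m v = v].

Definition povm {k} (Pp Pm Pq : 'M[C]_k) : Prop :=
  [/\ psd Pp, psd Pm, psd Pq & Pp + Pm + Pq = 1%:M].

Definition unamb {m} n (Pp Pm Pq : 'M[C]_(tdim m n)) : Prop :=
  [/\ povm Pp Pm Pq,
      (forall rho : 'M[C]_m, mixed rho -> \tr (Pp *m tpow n rho) = 0) &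
      (forall psi : 'cV[C]_m, unitvec psi ->
          (adj (tpowv n psi) *m Pm *m tpowv n psi) 0 0 = 0)].

(* efficiency; the prior measure on density operators is eta(rho) d rho,
   with d rho the image of the measure mu under st : X -> density operators *)
Definition efficiency {m} n {d} {X : measurableType d} (mu : {measure set X -> \bar R})
  (st : X -> 'M[C]_m) (eta : 'M[C]_m -> R) (Pp Pm : 'M[C]_(tdim m n)) : \bar R :=
  (\int[mu]_(x in [set x | mixed (st x)])
      (complex.Re (\tr (tpow n (st x) *m Pm)) * eta (st x))%:E
   + \int[mu]_(x in [set x | density (st x) /\ pure (st x)])
      (complex.Re (\tr (tpow n (st x) *m Pp)) * eta (st x))%:E)%E.

End QDefs.

From HB Require Import structures.
From mathcomp Require Import all_boot all_order all_algebra all_fingroup.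
From mathcomp Require Import complex.
From mathcomp Require Import all_classical all_reals all_analysis.
From mathcomp Require Import spectral ring.
Import Order.TTheory GRing.Theory Num.Theory.
Local Open Scope ring_scope.

(* The symmetric subspace is spanned by the product vectors |psi>^(x)n: a
   linear form vanishing on all of them yields, after the substitution
   psi_j = t^((n+1)^j), a polynomial in t vanishing everywhere, whose
   coefficients are the sums of the form over the orbits of indices under
   permutations of the factors.  Hence condition (ii) forces Pi_m to kill the
   symmetric subspace, and since Pi_m <= I it is dominated by the
   projector onto the complement: Tr(rho^(x)n Pi_m) <= Tr(rho^(x)n Phi(asym)).
   Condition (i), applied to the mixed state (|psi><psi| + I)/(m+1), whose
   n-th tensor power contains |psi><psi|^(x)n with positive weight, forces
   <psi|^(x)n Pi_p |psi>^(x)n = 0. *)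

Lemma mulmxv_inj (F : pzRingType) p q (A B : 'M[F]_(p, q)) :
  (forall v : 'cV[F]_q, A *m v = B *m v) -> A = B.
Proof.
by move=> AB; apply: trmx_inj; apply/row_matrixP => j; rewrite -!tr_col !colE AB.
Qed.

Section Adjoint.
Context {R : realType}.
Local Notation C := R[i].

Lemma adjE p q (A : 'M[C]_(p, q)) i j : adj A i j = (A j i)^*.
Proof. by rewrite !mxE. Qed.

Lemma adjM p q r (A : 'M[C]_(p, q)) (B : 'M[C]_(q, r)) :
  adj (A *m B) = adj B *m adj A.
Proof. by rewrite /adj map_mxM trmx_mul. Qed.

Lemma adjK p q (A : 'M[C]_(p, q)) : adj (adj A) = A.
Proof. by apply/matrixP => i j; rewrite !mxE conjCK. Qed.

Lemma adjD p q (A B : 'M[C]_(p, q)) : adj (A + B) = adj A + adj B.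
Proof. by rewrite /adj map_mxD linearD. Qed.

Lemma adjB p q (A B : 'M[C]_(p, q)) : adj (A - B) = adj A - adj B.
Proof. by rewrite /adj map_mxB linearB. Qed.

Lemma adjZ p q c (A : 'M[C]_(p, q)) : adj (c *: A) = c^* *: adj A.
Proof. by rewrite /adj map_mxZ linearZ. Qed.

Lemma adj1 p : adj (1%:M : 'M[C]_p) = 1%:M.
Proof. by rewrite /adj map_mx1 trmx1. Qed.

Lemma adj_sum p q (I : finType) (F : I -> 'M[C]_(p, q)) :
  adj (\sum_i F i) = \sum_i adj (F i).
Proof. by rewrite /adj raddf_sum linear_sum. Qed.

Lemma adj_tstar p q (A : 'M[C]_(p, q)) : adj A = (A ^t*)%sesqui.
Proof. by apply/matrixP => i j; rewrite !mxE. Qed.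

Lemma adjvC p (u v : 'cV[C]_p) : (adj u *m v) 0 0 = ((adj v *m u) 0 0)^*.
Proof. by rewrite -adjE adjM adjK. Qed.

Lemma adjvv_ge0 q (u : 'cV[C]_q) : 0 <= (adj u *m u) 0 0.
Proof. by rewrite mxE; apply: sumr_ge0 => i _; rewrite !mxE mulrC mul_conjC_ge0. Qed.

Lemma adjvv_eq0 q (u : 'cV[C]_q) : ((adj u *m u) 0 0 == 0) = (u == 0).
Proof.
apply/idP/eqP => [|->]; last by rewrite mulmx0 mxE.
rewrite mxE psumr_eq0 => [/allP u0|i _]; last by rewrite !mxE mulrC mul_conjC_ge0.
apply/matrixP => i j; rewrite (ord1 j) mxE.
have /implyP/(_ isT) := u0 i (mem_index_enum i).
by rewrite !mxE mulrC mul_conjC_eq0 => /eqP.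
Qed.

Lemma adj_delta p q (i : 'I_p) (j : 'I_q) :
  adj (delta_mx i j : 'M[C]_(p, q)) = delta_mx j i.
Proof. by apply/matrixP => a b; rewrite !mxE rmorph_nat andbC. Qed.

Definition sesq {k} (A : 'M[C]_k) (u v : 'cV[C]_k) : C := (adj u *m A *m v) 0 0.

Lemma sesq_delta k (A : 'M[C]_k) i j : sesq A (delta_mx i 0) (delta_mx j 0) = A i j.
Proof. by rewrite /sesq -mulmxA -colE adj_delta -rowE !mxE. Qed.

Lemma sesqZ k (A : 'M[C]_k) (u : 'cV[C]_k) (c : C) :
  sesq A (c *: u) (c *: u) = c^* * c * sesq A u u.
Proof. by rewrite /sesq adjZ -!scalemxAl -scalemxAr scalerA mxE. Qed.

Lemma sesqDZ k (A : 'M[C]_k) (u y : 'cV[C]_k) (c : C) :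
  sesq A (u + c *: y) (u + c *: y) =
  sesq A u u + c^* * c * sesq A y y + c * sesq A u y + c^* * sesq A y u.
Proof.
rewrite /sesq adjD adjZ !mulmxDl !mulmxDr -!scalemxAl -!scalemxAr !mxE.
ring.
Qed.

Lemma psd_sesqC k (A : 'M[C]_k) (u y : 'cV[C]_k) :
  psd A -> sesq A u y = (sesq A y u)^*.
Proof.
move=> A_psd; have q_real v : (sesq A v v)^* = sesq A v v.
  by apply: geC0_conj; apply: A_psd.
set x := sesq A u y; set z := sesq A y u.
(* polarization: the form is real at [u + y] and at [u + 'i y] *)
have re_xz : x + z = x^* + z^*.
  have := q_real (u + 1 *: y).
  rewrite sesqDZ conjC1 !mul1r !rmorphD /= !q_real -/x -/z -!addrA.
  by move=> /addrI /addrI.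
have im_xz : x - z = z^* - x^*.
  have := q_real (u + 'i *: y).
  rewrite sesqDZ conjCi mulNr -expr2 sqrCi mulNr mulN1r opprK !rmorphD !rmorphM /=.
  rewrite !q_real rmorphN /= conjCi -/x -/z -!addrA => /addrI /addrI.
  rewrite !mulNr opprK -mulrBr addrC -mulrBr => /mulfI -> //; exact: neq0Ci.
apply: (@mulfI _ 2%:R); first by rewrite pnatr_eq0.
have -> : 2%:R * x = (x + z) + (x - z) by ring.
by rewrite re_xz im_xz; ring.
Qed.

Lemma psd_adj {k} {A : 'M[C]_k} : psd A -> adj A = A.
Proof.
move=> A_psd; apply/matrixP => i j.
by rewrite adjE -!sesq_delta psd_sesqC ?conjCK.
Qed.

End Adjoint.

Section PositiveOperators.
Context {R : realType}.
Local Notation C := R[i].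

Lemma psdD k (A B : 'M[C]_k) : psd A -> psd B -> psd (A + B).
Proof. by move=> A_psd B_psd v; rewrite mulmxDr mulmxDl mxE addr_ge0. Qed.

Lemma sesq_sum_rank1 k (I : finType) (w : I -> C) (v : I -> 'cV[C]_k) u :
  sesq (\sum_j w j *: (v j *m adj (v j))) u u =
  \sum_j w j * (((adj (v j) *m u) 0 0)^* * (adj (v j) *m u) 0 0).
Proof.
rewrite /sesq mulmx_sumr mulmx_suml summxE; apply: eq_bigr => j _.
rewrite -scalemxAr -scalemxAl mxE; congr (_ * _).
rewrite !mulmxA -(mulmxA (adj u *m v j)) [in LHS]mxE big_ord1; congr (_ * _).
by rewrite -adjE adjM adjK.
Qed.

Lemma psd_sum_rank1 k (I : finType) (w : I -> C) (v : I -> 'cV[C]_k) :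
  (forall j, 0 <= w j) -> psd (\sum_j w j *: (v j *m adj (v j))).
Proof.
move=> w_ge0 u; rewrite -/(sesq _ u u) sesq_sum_rank1; apply: sumr_ge0 => j _.
by rewrite mulr_ge0 // mulrC mul_conjC_ge0.
Qed.

Lemma sesq_mulmx k l (A : 'M[C]_k) (M : 'M[C]_(k, l)) u v :
  sesq A (M *m u) (M *m v) = sesq (adj M *m A *m M) u v.
Proof. by rewrite /sesq adjM !mulmxA. Qed.

Lemma psd_spectral {k} {A : 'M[C]_k} : psd A ->
  exists (w : 'I_k -> C) (v : 'I_k -> 'cV[C]_k),
    (forall j, 0 <= w j) /\ A = \sum_j w j *: (v j *m adj (v j)).
Proof.
move=> A_psd; have A_normal : A \is normalmx.
  by apply/normalmxP; rewrite -adj_tstar psd_adj.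
have := orthomx_spectralP A_normal.
set P := spectralmx A; set d := spectral_diag A.
rewrite invmx_unitary ?spectral_unitarymx // -adj_tstar => AE.
have PP : P *m adj P = 1%:M by rewrite adj_tstar; apply/unitarymxP/spectral_unitarymx.
exists (fun j => d 0 j), (fun j => col j (adj P)); split.
  move=> j; have := A_psd (col j (adj P)).
  rewrite -/(sesq _ _ _) colE sesq_mulmx adjK sesq_delta.
  by rewrite AE !mulmxA PP mul1mx -mulmxA PP mulmx1 mxE eqxx mulr1n.
rewrite {1}AE; apply/matrixP => a b; rewrite mul_mx_diag summxE !mxE.
by apply: eq_bigr => j _; rewrite !mxE big_ord1 !mxE conjCK mulrA [_ * d 0 j]mulrC.
Qed.

Lemma psd_sesq_eq0 {k} {A : 'M[C]_k} {u} : psd A -> sesq A u u = 0 -> A *m u = 0.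
Proof.
move=> /psd_spectral [w [v [w_ge0 ->]]]; rewrite sesq_sum_rank1 => /eqP.
rewrite psumr_eq0 => [/allP wv0|j _]; last by rewrite mulr_ge0 // mulrC mul_conjC_ge0.
rewrite mulmx_suml; apply: big1 => j _; rewrite -scalemxAl -mulmxA.
have := wv0 j (mem_index_enum j); rewrite implyTb mulf_eq0 mulrC mul_conjC_eq0.
case/orP => /eqP vu0; first by rewrite vu0 scale0r.
by rewrite [adj _ *m _]mx11_scalar vu0 mul_mx_scalar scale0r scaler0.
Qed.

Lemma mxtrace_rank1 k (u : 'cV[C]_k) (A : 'M[C]_k) : \tr (u *m adj u *m A) = sesq A u u.
Proof. by rewrite -mulmxA mxtrace_mulC /mxtrace big_ord1. Qed.

Lemma mxtrace_sum_rank1 k (I : finType) (w : I -> C) (v : I -> 'cV[C]_k) (A : 'M[C]_k) :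
  \tr ((\sum_j w j *: (v j *m adj (v j))) *m A) = \sum_j w j * sesq A (v j) (v j).
Proof.
rewrite mulmx_suml raddf_sum /=; apply: eq_bigr => j _.
by rewrite -scalemxAl mxtraceZ mxtrace_rank1.
Qed.

Lemma psd_mxtrace_le k (rho A B : 'M[C]_k) : psd rho ->
  (forall u, sesq A u u <= sesq B u u) -> \tr (rho *m A) <= \tr (rho *m B).
Proof.
move=> /psd_spectral [w [v [w_ge0 ->]]] AB; rewrite !mxtrace_sum_rank1.
by apply: ler_sum => j _; apply: ler_wpM2l.
Qed.

Lemma psd_mxtrace_ge0 k (rho A : 'M[C]_k) : psd rho -> psd A -> 0 <= \tr (rho *m A).
Proof.
move=> rho_psd A_psd; rewrite -(mxtrace0 _ k) -(mulmx0 _ rho).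
by apply: psd_mxtrace_le => // u; rewrite /sesq mulmx0 mul0mx mxE; exact: A_psd.
Qed.

End PositiveOperators.

Section OrthogonalProjectors.
Context {R : realType}.
Local Notation C := R[i].

Definition orthocompl {k} (K : set 'cV[C]_k) : set 'cV[C]_k :=
  [set v | forall w, K w -> (adj w *m v) 0 0 = 0].

Lemma orth_proj_adjvv {k K P} (v : 'cV[C]_k) : orth_proj P K ->
  adj (P *m v) *m (P *m v) = adj v *m (P *m v).
Proof. by case=> PP P_adj _; rewrite adjM P_adj -mulmxA [P *m (P *m v)]mulmxA PP. Qed.

Lemma orth_proj_psd {k K} {P : 'M[C]_k} : orth_proj P K -> psd P.
Proof. by move=> P_proj v; rewrite -mulmxA -(orth_proj_adjvv v P_proj) adjvv_ge0. Qed.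

Lemma orth_proj_range {k K P} (v : 'cV[C]_k) : orth_proj P K -> K (P *m v).
Proof. by case=> PP _ PK; apply/PK; rewrite mulmxA PP. Qed.

Lemma orth_proj_compl_ker {k K Q} (s : 'cV[C]_k) :
  orth_proj Q (orthocompl K) -> K s -> Q *m s = 0.
Proof.
move=> Q_proj Ks; apply/eqP; rewrite -adjvv_eq0 (orth_proj_adjvv s Q_proj).
exact/eqP/(orth_proj_range s Q_proj).
Qed.

Lemma orth_proj_compl {k K} {P : 'M[C]_k} :
  orth_proj P K -> orth_proj (1%:M - P) (orthocompl K).
Proof.
move=> P_proj; have [PP P_adj PK] := P_proj.
split.
- by rewrite mulmxBl !mulmxBr !mul1mx mulmx1 PP subrr subr0.
- by rewrite adjB adj1 P_adj.
- move=> v; rewrite mulmxBl mul1mx; split=> [v_perp | Pv0 w /PK Pw].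
    suff -> : P *m v = 0 by rewrite subr0.
    apply/eqP; rewrite -adjvv_eq0 (orth_proj_adjvv v P_proj) adjvC.
    by rewrite (v_perp _ (orth_proj_range v P_proj)) conjC0.
  have {}Pv0 : P *m v = 0 by apply: oppr_inj; apply: (addrI v); rewrite Pv0 oppr0 addr0.
  by rewrite -Pw adjM P_adj -mulmxA Pv0 mulmx0 mxE.
Qed.

Lemma orth_proj_add_compl {k K} {P Q : 'M[C]_k} :
  orth_proj P K -> orth_proj Q (orthocompl K) -> P + Q = 1%:M.
Proof.
move=> P_proj Q_proj; apply: mulmxv_inj => v; rewrite mulmxDl mul1mx.
have [_ _ QK] := Q_proj.
have Q_compl : Q *m ((1%:M - P) *m v) = (1%:M - P) *m v.
  by apply/QK/orth_proj_range/orth_proj_compl.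
have Q_P : Q *m (P *m v) = 0 := orth_proj_compl_ker _ Q_proj (orth_proj_range v P_proj).
have v_split : v = (1%:M - P) *m v + P *m v by rewrite mulmxBl mul1mx subrK.
by rewrite {2}v_split mulmxDr Q_compl Q_P addr0 addrC -v_split.
Qed.

Lemma sesq_le_orth_proj_compl {k K} {A P Q : 'M[C]_k} {u : 'cV[C]_k} :
  psd A -> psd (1%:M - A) -> (forall s, K s -> A *m s = 0) ->
  orth_proj P K -> orth_proj Q (orthocompl K) -> sesq A u u <= sesq Q u u.
Proof.
move=> A_psd A_le1 A_K P_proj Q_proj; set w := Q *m u.
have Au : A *m u = A *m w.
  rewrite -{1}[u]mul1mx -(orth_proj_add_compl P_proj Q_proj) mulmxDl mulmxDr.
  by rewrite A_K ?add0r //; exact: orth_proj_range.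
have uA : adj u *m A = adj w *m A by rewrite -(psd_adj A_psd) -!adjM Au.
rewrite /sesq uA -!mulmxA Au -(orth_proj_adjvv u Q_proj) -/w.
have := A_le1 w; rewrite mulmxBr mulmx1 mulmxBl [X in 0 <= X]mxE [X in 0 <= _ + X]mxE.
by rewrite subr_ge0 mulmxA.
Qed.

End OrthogonalProjectors.

Section Symmetrizer.
Context {R : realType}.
Local Notation C := R[i].
Variables m n : nat.
Local Notation N := (tdim m n).

Definition tidx_perm (s : 'S_n) (a : 'I_N) : 'I_N :=
  enum_rank [ffun k => (enum_val a : tidx m n) (s k)].

Lemma tidx_permM s t a : tidx_perm s (tidx_perm t a) = tidx_perm (s * t)%g a.
Proof.
rewrite /tidx_perm enum_rankK; congr enum_rank; apply/ffunP => k.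
by rewrite !ffunE permM.
Qed.

Lemma tidx_perm1 a : tidx_perm 1%g a = a.
Proof.
rewrite /tidx_perm -[RHS]enum_valK; congr enum_rank; apply/ffunP => k.
by rewrite ffunE perm1.
Qed.

Lemma tidx_permV s a b : (tidx_perm s b == a) = (tidx_perm s^-1 a == b).
Proof.
by apply/eqP/eqP => <-; rewrite tidx_permM ?mulVg ?mulgV tidx_perm1.
Qed.

Definition perm_tmx (s : 'S_n) : 'M[C]_N := \matrix_(a, b) (tidx_perm s a == b)%:R.

Lemma permvE s (v : 'cV[C]_N) : permv s v = perm_tmx s *m v.
Proof.
apply/matrixP => a j; rewrite (ord1 j) !mxE (bigD1 (tidx_perm s a)) //= !mxE eqxx mul1r.
by rewrite big1 ?addr0 // => b /negbTE bs; rewrite !mxE eq_sym bs mul0r.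
Qed.

Lemma adj_perm_tmx s : adj (perm_tmx s) = perm_tmx s^-1.
Proof. by apply/matrixP => a b; rewrite !mxE -tidx_permV rmorph_nat. Qed.

Lemma permvM s t (v : 'cV[C]_N) : permv t (permv s v) = permv (s * t)%g v.
Proof. by apply/matrixP => a j; rewrite !mxE; congr (v _ _); exact: tidx_permM. Qed.

Definition symmetrizer : 'M[C]_N := (n`!%:R)^-1 *: \sum_(s : 'S_n) perm_tmx s.

Lemma symmetrizer_mulv (v : 'cV[C]_N) :
  symmetrizer *m v = (n`!%:R)^-1 *: \sum_(s : 'S_n) permv s v.
Proof.
rewrite -scalemxAl mulmx_suml; congr (_ *: _); apply: eq_bigr => s _.
by rewrite permvE.
Qed.

Lemma sym_symmetrizer (v : 'cV[C]_N) : sym_space m n (symmetrizer *m v).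
Proof.
move=> t; rewrite symmetrizer_mulv permvE -scalemxAr mulmx_sumr; congr (_ *: _).
under eq_bigr do rewrite -permvE permvM.
by rewrite [RHS](reindex_inj (mulIg t)).
Qed.

Lemma symmetrizer_id (v : 'cV[C]_N) : sym_space m n v -> symmetrizer *m v = v.
Proof.
move=> v_sym; rewrite symmetrizer_mulv.
under eq_bigr do rewrite v_sym.
by rewrite sumr_const card_Sn -scalerMnr scalerMnl -mulr_natr mulVf ?scale1r.
Qed.

Lemma orth_proj_symmetrizer : orth_proj symmetrizer (sym_space m n).
Proof.
split.
- by apply: mulmxv_inj => v; rewrite -mulmxA symmetrizer_id //; exact: sym_symmetrizer.
- rewrite /symmetrizer adjZ adj_sum geC0_conj ?invr_ge0 ?ler0n //.
  congr (_ *: _); rewrite [RHS](reindex_inj invg_inj) /=.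
  by apply: eq_bigr => s _; rewrite adj_perm_tmx.
- by move=> v; split=> [/symmetrizer_id // | <-]; exact: sym_symmetrizer.
Qed.

Lemma tpowv_sym (psi : 'cV[C]_m) : sym_space m n (tpowv n psi).
Proof.
move=> s; apply/matrixP => a j; rewrite !mxE enum_rankK.
rewrite [RHS](reindex_inj (@perm_inj _ s)) /=.
by apply: eq_bigr => k _; rewrite ffunE.
Qed.

End Symmetrizer.

Section TensorPowers.
Context {R : realType}.
Local Notation C := R[i].

Definition tprodv {m} n {I : finType} (v : I -> 'cV[C]_m) (f : {ffun 'I_n -> I}) :
  'cV[C]_(tdim m n) :=
  \col_a \prod_(k < n) v (f k) ((enum_val a : tidx m n) k) 0.

Lemma tpow_sum_rank1 {m} n (I : finType) (w : I -> C) (v : I -> 'cV[C]_m) :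
  tpow n (\sum_j w j *: (v j *m adj (v j))) =
  \sum_(f : {ffun 'I_n -> I})
     (\prod_k w (f k)) *: (tprodv n v f *m adj (tprodv n v f)).
Proof.
apply/matrixP => a b; rewrite mxE summxE.
under eq_bigr do rewrite summxE.
rewrite bigA_distr_bigA; apply: eq_bigr => f _.
rewrite !mxE big_ord1 !mxE rmorph_prod -!big_split; apply: eq_bigr => k _.
by rewrite /= [LHS]mxE [X in _ * X]mxE big_ord1 adjE.
Qed.

Lemma tpow_rank1 {m} n (psi : 'cV[C]_m) :
  tpow n (psi *m adj psi) = tpowv n psi *m adj (tpowv n psi).
Proof.
apply/matrixP => a b; rewrite !mxE big_ord1 !mxE rmorph_prod -big_split.
by apply: eq_bigr => k _; rewrite !mxE big_ord1 !mxE.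
Qed.

Lemma psd_tpow {m} n (rho : 'M[C]_m) : psd rho -> psd (tpow n rho).
Proof.
move=> /psd_spectral [w [v [w_ge0 ->]]]; rewrite tpow_sum_rank1.
by apply: psd_sum_rank1 => f; apply: prodr_ge0.
Qed.

Lemma tpowvZ {m} n c (psi : 'cV[C]_m) : tpowv n (c *: psi) = c ^+ n *: tpowv n psi.
Proof.
apply/matrixP => a j; rewrite !mxE.
under eq_bigr do rewrite mxE.
by rewrite big_split /= prodr_const card_ord.
Qed.

End TensorPowers.

Section MultisetCode.
Local Open Scope nat_scope.

Lemma digits_inj {B M : nat} {c d : nat -> nat} : 0 < B ->
  (forall j, c j < B) -> (forall j, d j < B) ->
  \sum_(j < M) c j * B ^ j = \sum_(j < M) d j * B ^ j ->
  forall j, j < M -> c j = d j.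
Proof.
move=> B_gt0; elim: M c d => [|M IH] c d cB dB //.
rewrite !big_ord_recl /= !expn0 !muln1.
have shift (f : nat -> nat) : \sum_(i < M) f (lift ord0 i) * B ^ lift ord0 i =
    (\sum_(i < M) f i.+1 * B ^ i) * B.
  by rewrite big_distrl /=; apply: eq_bigr => i _; rewrite expnS mulnCA mulnC.
rewrite !shift ![c 0 + _]addnC ![d 0 + _]addnC => E.
have c0d0 : c 0 = d 0.
  by have := congr1 (modn^~ B) E; rewrite !modnMDl !modn_small.
have {}E : \sum_(i < M) c i.+1 * B ^ i = \sum_(i < M) d i.+1 * B ^ i.
  by have := congr1 (divn^~ B) E; rewrite !divnMDl // !divn_small // !addn0.
by case=> [|j] //= jM; apply: (IH (fun i => c i.+1) (fun i => d i.+1)).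
Qed.

Lemma sum_expn_count (B m : nat) (s : seq 'I_m) :
  \sum_(x <- s) B ^ x = \sum_(j < m) count_mem j s * B ^ j.
Proof.
elim: s => [|x s IH]; first by rewrite big_nil big1.
rewrite big_cons IH /=.
transitivity (\sum_(j < m) ((x == j) * B ^ j + count_mem j s * B ^ j)).
  rewrite big_split /=; congr (_ + _).
  by rewrite (bigD1 x) //= eqxx mul1n big1 ?addn0 // => j /negbTE jx; rewrite eq_sym jx.
by apply: eq_bigr => j _; rewrite mulnDl.
Qed.

(* The base-[n.+1] digits of [tidx_code a] count how often [a] takes each
   value; no digit exceeds [n], so the code determines [a] up to a permutation. *)
Definition tidx_code {m n} (a : {ffun 'I_n -> 'I_m}) : nat := \sum_(k < n) n.+1 ^ a k.

Lemma tidx_code_lt {m n} (a : {ffun 'I_n -> 'I_m}) : tidx_code a < (n * n.+1 ^ m).+1.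
Proof.
rewrite ltnS /tidx_code -[X in _ <= X * _]card_ord -sum_nat_const.
by apply: leq_sum => k _; rewrite leq_pexp2l // ltnW.
Qed.

Lemma tidx_code_perm {m n} (a b : {ffun 'I_n -> 'I_m}) :
  tidx_code a = tidx_code b -> exists s : 'S_n, forall k, b k = a (s k).
Proof.
have codeE (f : {ffun 'I_n -> 'I_m}) :
    tidx_code f = \sum_(j < m) count_mem j [tuple f k | k < n] * n.+1 ^ j.
  by rewrite -sum_expn_count big_tuple; apply: eq_bigr => k _; rewrite tnth_mktuple.
pose cnt (f : {ffun 'I_n -> 'I_m}) j :=
  count (fun y : 'I_m => val y == j) [tuple f k | k < n].
have cnt_lt f j : cnt f j < n.+1.
  by rewrite ltnS (leq_trans (count_size _ _)) // size_tuple.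
have cntE (f : {ffun 'I_n -> 'I_m}) (j : 'I_m) :
    count_mem j [tuple f k | k < n] = cnt f j by apply: eq_count.
rewrite !codeE (eq_bigr _ (fun j _ => congr1 (muln^~ _) (cntE a j))).
rewrite (eq_bigr _ (fun j _ => congr1 (muln^~ _) (cntE b j))).
move=> /(digits_inj (ltn0Sn n) (cnt_lt a) (cnt_lt b)) E.
have /tuple_permP [s ab] : perm_eq [tuple b k | k < n] [tuple a k | k < n].
  by apply/allP => x _; apply/eqP; rewrite !cntE; apply/esym/E.
exists s => k; have := congr1 (fun t => nth (a k) t k) ab.
by rewrite -!tnth_nth !tnth_mktuple.
Qed.

End MultisetCode.

Section SymmetricSpan.
Context {R : realType}.
Local Notation C := R[i].
Variables m n : nat.
Local Notation N := (tdim m n).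
Local Notation code a := (tidx_code (enum_val a : tidx m n)).

Lemma sym_tidx_code (s : 'cV[C]_N) a b :
  sym_space m n s -> code a = code b -> s a 0 = s b 0.
Proof.
move=> s_sym /tidx_code_perm [p ab]; rewrite -[in LHS](s_sym p) mxE.
congr (s _ 0); rewrite -[RHS]enum_valK; congr enum_rank.
by apply/ffunP => k; rewrite ffunE.
Qed.

Definition geomv (t : C) : 'cV[C]_m := \col_(j < m) t ^+ (n.+1 ^ j).

Lemma tpowv_geomv t a : tpowv n (geomv t) a 0 = t ^+ code a.
Proof. by rewrite mxE; under eq_bigr do rewrite mxE; rewrite prodrXr. Qed.

Lemma geomv_neq0 t : (0 < m)%N -> t != 0 -> geomv t != 0.
Proof.
move=> m_gt0 t_neq0; apply/eqP => /matrixP /(_ (Ordinal m_gt0) 0).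
by rewrite !mxE expn0 expr1; apply/eqP.
Qed.

(* The polynomial [\sum_a c a X^(code a)] vanishes at every [t != 0], hence
   is zero; its coefficients are the sums of [c] over the code classes, on
   which symmetric vectors are constant. *)
Lemma sym_orth_tpowv (c : 'rV[C]_N) (s : 'cV[C]_N) : (0 < m)%N ->
  (forall psi, psi != 0 -> c *m tpowv n psi = 0) -> sym_space m n s -> c *m s = 0.
Proof.
move=> m_gt0 c_perp s_sym.
pose p : {poly C} := \sum_a c 0 a *: 'X^(code a).
have p_eq0 : p = 0.
  apply: (@roots_geq_poly_eq0 _ _ (mkseq (fun k => k.+1%:R) (size p))).
  - apply/allP => _ /mapP [k _ ->]; apply/rootP.
    have k1_neq0 : k.+1%:R != 0 :> C by rewrite pnatr_eq0.
    transitivity ((c *m tpowv n (geomv k.+1%:R)) 0 0).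
      rewrite mxE horner_sum; apply: eq_bigr => a _.
      by rewrite hornerZ hornerXn tpowv_geomv.
    by rewrite c_perp ?geomv_neq0 // mxE.
  - rewrite map_inj_uniq ?iota_uniq // => i j /eqP.
    by rewrite eqr_nat eqSS => /eqP.
  - by rewrite size_mkseq.
pose B := (n * n.+1 ^ m).+1.
pose g (E : 'I_B) := if [pick a : 'I_N | code a == E] is Some a then s a 0 else 0.
have code_eq (a : 'I_N) (E : 'I_B) : (inord (code a) == E :> 'I_B) = (code a == E).
  by rewrite -val_eqE /= inordK // tidx_code_lt.
have sE (a : 'I_N) (E : 'I_B) : code a == E -> s a 0 = g E.
  rewrite /g; case: pickP => [b /eqP <- /eqP|/(_ a) -> //]; exact: sym_tidx_code.
apply/matrixP => i j; rewrite !ord1 !mxE.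
rewrite (partition_big (fun a => inord (code a) : 'I_B) xpredT) //=.
apply: big1 => E _.
under eq_bigl do rewrite code_eq.
under eq_bigr => a /sE -> do [].
rewrite -mulr_suml.
have -> : \sum_(a | code a == E) c 0 a = p`_E.
  rewrite coef_sum big_mkcond /=; apply: eq_bigr => a _.
  by rewrite coefZ coefXn eq_sym; case: eqP; rewrite ?mulr1 ?mulr0.
by rewrite p_eq0 coef0 mul0r.
Qed.

End SymmetricSpan.

Section UnambiguousDiscrimination.
Context {R : realType}.
Local Notation C := R[i].
Context {m n : nat}.
Local Notation N := (tdim m n).

Lemma unitvec_adjvv k (psi : 'cV[C]_k) : unitvec psi -> adj psi *m psi = 1%:M.
Proof. by move=> psi_unit; rewrite [LHS]mx11_scalar psi_unit. Qed.

Lemma pure_mulmx_id k (rho : 'M[C]_k) : pure rho -> rho *m rho = rho.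
Proof.
by move=> [chi [chi_unit ->]]; rewrite mulmxA -(mulmxA chi) unitvec_adjvv // mulmx1.
Qed.

Lemma sesq_tpowv_eq0 (A : 'M[C]_N) :
  (forall psi, unitvec psi -> sesq A (tpowv n psi) (tpowv n psi) = 0) ->
  forall psi, psi != 0 -> sesq A (tpowv n psi) (tpowv n psi) = 0.
Proof.
move=> A0 psi psi_neq0; set nu := (adj psi *m psi) 0 0.
have nu_gt0 : 0 < nu by rewrite lt_def adjvv_eq0 psi_neq0 adjvv_ge0.
set c := sqrtC nu^-1.
have cc : c^* * c = nu^-1.
  by rewrite geC0_conj ?sqrtC_ge0 ?invr_ge0 ?ltW // -expr2 sqrtCK.
have c_neq0 : c != 0 by rewrite sqrtC_eq0 invr_eq0 gt_eqF.
have : unitvec (c *: psi).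
  by rewrite /unitvec adjZ -scalemxAl -scalemxAr scalerA mxE cc mulVf ?gt_eqF.
move=> /A0; rewrite tpowvZ sesqZ => /eqP; rewrite !mulf_eq0 conjC_eq0 orbb.
by rewrite expf_eq0 (negPf c_neq0) andbF => /eqP.
Qed.

Lemma psd_sym_ker (A : 'M[C]_N) : (0 < m)%N -> psd A ->
  (forall psi, unitvec psi -> sesq A (tpowv n psi) (tpowv n psi) = 0) ->
  forall s, sym_space m n s -> A *m s = 0.
Proof.
move=> m_gt0 A_psd A0 s s_sym; apply/row_matrixP => r; rewrite row_mul row0.
apply: sym_orth_tpowv => // psi psi_neq0.
by rewrite -row_mul psd_sesq_eq0 ?row0 // sesq_tpowv_eq0.
Qed.

Definition cons_basis (psi : 'cV[C]_m) (j : 'I_m.+1) : 'cV[C]_m :=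
  if unlift ord0 j is Some j' then delta_mx j' 0 else psi.

Definition noisy_state (psi : 'cV[C]_m) : 'M[C]_m :=
  (m.+1%:R)^-1 *: (psi *m adj psi + 1%:M).

Lemma noisy_state_sum_rank1 psi : noisy_state psi =
  \sum_(j < m.+1) (m.+1%:R)^-1 *: (cons_basis psi j *m adj (cons_basis psi j)).
Proof.
rewrite /noisy_state -scaler_sumr big_ord_recl /cons_basis unlift_none mx1_sum_delta.
congr (_ *: (_ + _)); apply: eq_bigr => j _.
by rewrite liftK adj_delta mul_delta_mx.
Qed.

Lemma mixed_noisy_state psi : (1 < m)%N -> unitvec psi -> mixed (noisy_state psi).
Proof.
move=> m_gt1 psi_unit; have c_neq0 : m.+1%:R != 0 :> C by rewrite pnatr_eq0.
split; [split|].
- rewrite noisy_state_sum_rank1; apply: psd_sum_rank1 => j.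
  by rewrite invr_ge0 ler0n.
- rewrite mxtraceZ mxtraceD mxtrace_mulC /mxtrace big_ord1 psi_unit.
  by rewrite -/(mxtrace _) mxtrace1 -natr1 addrC mulVf.
move=> /pure_mulmx_id idem.
pose a : C := 2%:R / m.+1%:R.
have noisy_psi : noisy_state psi *m psi = a *: psi.
  rewrite -scalemxAl mulmxDl -mulmxA unitvec_adjvv // mulmx1 mul1mx.
  by rewrite -mulr2n -scalerMnr scalerMnl /a mulr_natl.
have a_idem : a *: (a *: psi) = a *: psi.
  by rewrite -noisy_psi scalemxAr -noisy_psi mulmxA idem.
have psi_neq0 : psi != 0 by rewrite -adjvv_eq0 psi_unit oner_eq0.
move/eqP: a_idem; rewrite scalerA -subr_eq0 -scalerBl scaler_eq0 (negPf psi_neq0) orbF.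
rewrite -{3}(mulr1 a) -mulrBr mulf_eq0 subr_eq0 => /orP[|].
  by rewrite mulf_eq0 pnatr_eq0 invr_eq0 (negPf c_neq0).
rewrite -(inj_eq (mulIf c_neq0)) divfK // mul1r eqr_nat => /eqP [m_eq1].
by rewrite -m_eq1 in m_gt1.
Qed.

Lemma unamb_Pp_pure {Pp Pm Pq : 'M[C]_N} {psi : 'cV[C]_m} :
  (1 < m)%N -> unamb n Pp Pm Pq -> unitvec psi ->
  sesq Pp (tpowv n psi) (tpowv n psi) = 0.
Proof.
move=> m_gt1 [[Pp_psd _ _ _] Pp_mixed _] psi_unit.
have := Pp_mixed _ (mixed_noisy_state psi m_gt1 psi_unit).
rewrite noisy_state_sum_rank1 tpow_sum_rank1 mxtrace_mulC mxtrace_sum_rank1 => /eqP.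
rewrite psumr_eq0 => [/allP /(_ [ffun => ord0] (mem_index_enum _))|f _]; last first.
  by rewrite mulr_ge0 ?prodr_ge0 ?Pp_psd // => k _; rewrite invr_ge0 ler0n.
rewrite implyTb mulf_eq0 prodr_const expf_eq0 invr_eq0 pnatr_eq0 andbF /= => /eqP.
suff -> : tprodv n (cons_basis psi) [ffun => ord0] = tpowv n psi by [].
apply/matrixP => a j; rewrite !mxE; apply: eq_bigr => k _.
by rewrite ffunE /cons_basis unlift_none.
Qed.

Lemma unamb_Pm_sym_ker {Pp Pm Pq : 'M[C]_N} {s : 'cV[C]_N} :
  (0 < m)%N -> unamb n Pp Pm Pq -> sym_space m n s -> Pm *m s = 0.
Proof. by move=> m_gt0 [[_ Pm_psd _ _] _ Pm_pure]; apply: psd_sym_ker. Qed.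

Lemma unamb_mxtrace_le {Psym Pasym Pp Pm Pq : 'M[C]_N} {rho : 'M[C]_m} :
  (0 < m)%N -> orth_proj Psym (sym_space m n) -> orth_proj Pasym (asym_space m n) ->
  unamb n Pp Pm Pq -> psd rho ->
  0 <= \tr (tpow n rho *m Pm) <= \tr (tpow n rho *m Pasym).
Proof.
move=> m_gt0 Hs Ha Hu rho_psd; have [[Pp_psd Pm_psd Pq_psd Psum] _ _] := Hu.
have rho_n_psd := psd_tpow n rho rho_psd.
rewrite psd_mxtrace_ge0 //=; apply: psd_mxtrace_le => // u.
apply: (sesq_le_orth_proj_compl Pm_psd _ _ Hs Ha).
  by rewrite -Psum addrAC addrK; apply: psdD.
by move=> s; exact: unamb_Pm_sym_ker m_gt0 Hu.
Qed.

Lemma unamb_orth_proj (Psym Pasym : 'M[C]_N) :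
  orth_proj Psym (sym_space m n) -> orth_proj Pasym (asym_space m n) ->
  unamb n 0 Pasym Psym.
Proof.
move=> Hs Ha; split; [split | |].
- by move=> v; rewrite mulmx0 mul0mx mxE.
- exact: orth_proj_psd Ha.
- exact: orth_proj_psd Hs.
- by rewrite add0r addrC (orth_proj_add_compl Hs Ha).
- by move=> rho _; rewrite mul0mx mxtrace0.
- move=> psi _; have Pasym_psi := orth_proj_compl_ker _ Ha (tpowv_sym m n psi).
  by rewrite -mulmxA Pasym_psi mulmx0 mxE.
Qed.

End UnambiguousDiscrimination.

Lemma ler_Re {R : realType} {x y : R[i]} : x <= y -> complex.Re x <= complex.Re y.
Proof. by rewrite lecE => /andP[]. Qed.

(* No measurability is needed: a nonnegative integral is the supremum of the
   integrals of the simple functions below the integrand. *)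
Lemma le_ge0_integral d (T : measurableType d) (R : realType)
    (mu : {measure set T -> \bar R}) (D : set T) (f g : T -> \bar R) :
  (forall x, D x -> 0 <= f x)%E -> (forall x, D x -> f x <= g x)%E ->
  (\int[mu]_(x in D) f x <= \int[mu]_(x in D) g x)%E.
Proof.
move=> f_ge0 fg; rewrite !ge0_integralE // => [|x Dx]; last first.
  exact: le_trans (f_ge0 x Dx) (fg x Dx).
apply: ereal_sup_le => _ [h h_le <-]; exists h => //= x.
apply: le_trans (h_le x) _; rewrite /patch; case: ifP => // /set_mem Dx.
exact: fg.
Qed.

Lemma efficiency_le {R : realType} {m} n d (X : measurableType d)
    (mu : {measure set X -> \bar R}) (st : X -> 'M[R[i]]_m) (eta : 'M[R[i]]_m -> R)
    (Pp Pm Q : 'M[R[i]]_(tdim m n)) :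
  (forall rho, density rho -> 0 <= eta rho) ->
  (forall rho, pure rho -> \tr (tpow n rho *m Pp) = 0) ->
  (forall rho, mixed rho -> 0 <= \tr (tpow n rho *m Pm) <= \tr (tpow n rho *m Q)) ->
  (efficiency n mu st eta Pp Pm <= efficiency n mu st eta 0 Q)%E.
Proof.
move=> eta_ge0 Pp_pure PmQ; rewrite /efficiency.
have -> : (\int[mu]_(x in [set x | density (st x) /\ pure (st x)])
    (complex.Re (\tr (tpow n (st x) *m Pp)) * eta (st x))%:E = 0)%E.
  by apply: integral0_eq => x [_ /Pp_pure ->]; rewrite mul0r.
have -> : (\int[mu]_(x in [set x | density (st x) /\ pure (st x)])
    (complex.Re (\tr (tpow n (st x) *m 0)) * eta (st x))%:E = 0)%E.
  by apply: integral0_eq => x _; rewrite mulmx0 mxtrace0 mul0r.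
rewrite !adde0; apply: le_ge0_integral => x x_mixed;
  have /andP[Pm_ge0 PmQx] := PmQ _ x_mixed;
  have eta_x_ge0 := eta_ge0 _ x_mixed.1; rewrite lee_fin.
- exact: mulr_ge0 (ler_Re Pm_ge0) eta_x_ge0.
- by apply: ler_wpM2r => //; exact: ler_Re.
Qed.

Theorem theorem1 (R : realType) (m n : nat) (Hm : (1 < m)%N) (Hn : (0 < n)%N)
  (d : measure_display) (X : measurableType d) (mu : {measure set X -> \bar R})
  (st : X -> 'M[R[i]]_m) (Hst : forall x, density (st x))
  (eta : 'M[R[i]]_m -> R)
  (Heta0 : forall rho, density rho -> 0 <= eta rho)
  (HetaU : forall (U rho : 'M[R[i]]_m), U \is unitarymx -> density rho ->
             eta (U *m rho *m adj U) = eta rho) :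
  (exists P, orth_proj P (sym_space (R:=R) m n)) /\
  (exists P, orth_proj P (asym_space (R:=R) m n)) /\
  forall Psym Pasym : 'M[R[i]]_(tdim m n),
    orth_proj Psym (sym_space (R:=R) m n) -> orth_proj Pasym (asym_space (R:=R) m n) ->
    unamb n 0 Pasym Psym /\
    (forall Pp Pm Pq : 'M[R[i]]_(tdim m n), unamb n Pp Pm Pq ->
       (efficiency n mu st eta Pp Pm <= efficiency n mu st eta 0 Pasym)%E).
Proof.
split; first by exists (symmetrizer m n); exact: orth_proj_symmetrizer.
split.
  by exists (1%:M - symmetrizer m n); exact/orth_proj_compl/orth_proj_symmetrizer.
move=> Psym Pasym Hs Ha; split; first exact: unamb_orth_proj.
move=> Pp Pm Pq Hu; apply: efficiency_le => //.
  move=> _ [psi [psi_unit ->]].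
  by rewrite tpow_rank1 mxtrace_rank1 (unamb_Pp_pure Hm Hu psi_unit).
move=> rho [[rho_psd _] _]; exact: unamb_mxtrace_le (ltnW Hm) Hs Ha Hu rho_psd.
Qed.
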